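(* Let $\langle S,L,\tau,\ell\rangle$ be a labelled Markov chain and let $s,t\in S$ with $s\simeq t$. Then the function $\delta_{\_}(s,t):(S\to\mathcal{D}(S))\to[0,1]$, $\sigma\mapsto\delta_\sigma(s,t)$, is continuous at $\tau$; that is, for every sequence $(\tau_n)_n$ of transition functions $\tau_n:S\to\mathcal{D}(S)$ converging to $\tau$ we have $\lim_n \delta_{\tau_n}(s,t)=0$.
   Context: A labelled Markov chain is a tuple $\langle S,L,\tau,\ell\rangle$ with $S$ a finite set of states, $L$ a finite set of labels, $\tau:S\to\mathcal{D}(S)$ a transition function ($\mathcal{D}(X)$ = probability distributions on $X$) and $\ell:S\to L$ a labelling; assume $|\ell(S)|\ge 2$. For $\mu,\nu\in\mathcal{D}(X)$, the set of couplings is $\Omega(\mu,\nu)=\{\omega\in\mathcal{D}(X\times X)\mid \forall x:\ \sum_y\omega(x,y)=\mu(x),\ \sum_y\omega(y,x)=\nu(x)\}$. Transition functions $S\to\mathcal{D}(S)$ are equipped with the metric $d_F(\sigma,\tau)=\max_{s\in S}\max_{x\in S}|\sigma(s)(x)-\tau(s)(x)|$, and convergence refers to this metric. The probabilistic bisimilarity distance $\delta_\tau:S\times S\to[0,1]$ is the least fixed point of $\Delta_\tau$, where $\Delta_\tau(d)(s,t)=1$ if $\ell(s)\ne\ell(t)$ and $\Delta_\tau(d)(s,t)=\inf_{\omega\in\Omega(\tau(s),\tau(t))}\sum_{u,v}\omega(u,v)d(u,v)$ otherwise. Let $S^2_\Delta=\{(s,s)\mid s\in S\}$, $S^2_1=\{(s,t)\mid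 \ell(s)\ne\ell(t)\}$, $S^2_{0?}=(S\times S)\setminus(S^2_\Delta\cup S^2_1)$. A policy for $\tau$ is a map $P:S\times S\to\mathcal{D}(S\times S)$ such that $P(s,t)\in\Omega(\tau(s),\tau(t))$ for all $(s,t)\in S^2_\Delta\cup S^2_{0?}$, and $P(s,t)$ is the point mass on $(s,t)$ for $(s,t)\in S^2_1$; $\mathcal{P}_\tau$ denotes the set of policies, and each $P$ induces a Markov chain $\langle S\times S,P\rangle$. Robust bisimilarity: $s\simeq t$ iff there is $P\in\mathcal{P}_\tau$ such that $(s,t)$ reaches $S^2_\Delta$ with probability $1$ in $\langle S\times S,P\rangle$. *)

From HB Require Import structures.
From mathcomp Require Import all_boot all_order all_algebra.
From mathcomp Require Import all_classical all_reals all_analysis.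
Set Implicit Arguments. Unset Strict Implicit. Unset Printing Implicit Defensive.
Import Order.TTheory GRing.Theory Num.Theory numFieldNormedType.Exports.
Local Open Scope ring_scope.
Local Open Scope classical_set_scope.

Section LMC.
Variable R : realType.

Definition is_distr (X : finType) (mu : X -> R) : Prop :=
  (forall x, 0 <= mu x) /\ \sum_(x : X) mu x = 1.

Variable S : finType.

Definition is_trans (tau : S -> S -> R) : Prop := forall s, is_distr (tau s).

Definition coupling (mu nu : S -> R) (omega : S * S -> R) : Prop :=
  is_distr omega /\
  (forall x, \sum_(y : S) omega (x, y) = mu x) /\
  (forall x, \sum_(y : S) omega (y, x) = nu x).

Definition dF (sigma tau : S -> S -> R) : R :=
  \big[Num.max/0]_(s : S) \big[Num.max/0]_(x : S) `|sigma s x - tau s x|.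

Variable L : eqType.
Variable ell : S -> L.

Definition Delta (tau : S -> S -> R) (d : S -> S -> R) : S -> S -> R :=
  fun s t =>
    if ell s != ell t then 1
    else inf [set r | exists omega, coupling (tau s) (tau t) omega /\
                 r = \sum_(u : S) \sum_(v : S) omega (u, v) * d u v].

Definition unit_valued (d : S -> S -> R) : Prop :=
  forall s t, 0 <= d s t <= 1.

(* d is the least fixed point of Delta_tau on functions S x S -> [0,1],
   ordered pointwise; i.e. d = delta_tau *)
Definition is_bisim_dist (tau : S -> S -> R) (d : S -> S -> R) : Prop :=
  [/\ unit_valued d, Delta tau d = d &
      forall d', unit_valued d' -> Delta tau d' = d' ->
                 forall s t, d s t <= d' s t].

Definition S2_Delta : set (S * S) := [set p | p.1 = p.2].
Definition S2_1 : set (S * S) := [set p | ell p.1 != ell p.2].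
Definition S2_0q : set (S * S) := ~` (S2_Delta `|` S2_1).

Definition is_policy (tau : S -> S -> R) (P : S * S -> S * S -> R) : Prop :=
  (forall p, (S2_Delta `|` S2_0q) p -> coupling (tau p.1) (tau p.2) (P p)) /\
  (forall p, S2_1 p -> forall q, P p q = (if q == p then 1 else 0)).

Fixpoint reach_within (P : S * S -> S * S -> R) (T : set (S * S)) (n : nat)
  (x : S * S) : R :=
  match n with
  | 0%N => if `[< T x >] then 1 else 0
  | n'.+1 => if `[< T x >] then 1
             else \sum_(y : S * S) P x y * reach_within P T n' y
  end.

(* x reaches T with probability 1: the probability of the event
   "eventually in T", i.e. the limit of the within-n-steps probabilities,
   equals 1 *)
Definition reaches_as (P : S * S -> S * S -> R) (T : set (S * S))
  (x : S * S) : Prop :=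
  (fun n : nat => reach_within P T n x) @ \oo --> (1 : R).

Definition robust_bisim (tau : S -> S -> R) (s t : S) : Prop :=
  exists P, is_policy tau P /\ reaches_as P S2_Delta (s, t).

End LMC.

(* Fix a policy P for tau under which (s, t) reaches the diagonal almost surely,
   and let r_k(p) be the probability of reaching the diagonal from p within k
   steps.  For a transition function sigma put eta = 2 |S| d_F(sigma, tau).  A
   coupling of tau(u), tau(v) can be turned into a coupling of sigma(u),
   sigma(v) at an extra cost of at most eta, so one step of P shows that
   min_{j <= N} (1 - r_j + j eta) is a prefixed point of Delta_sigma, whence
   delta_sigma(s, t) <= 1 - r_N(s, t) + N eta.  Since r_N(s, t) -> 1, choosing
   N first and then sigma close to tau makes the bound small. *)

From HB Require Import structures.
From mathcomp Require Import all_boot all_order all_algebra.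
From mathcomp Require Import all_classical all_reals all_analysis.
From mathcomp Require Import lra.
Import Order.TTheory GRing.Theory Num.Theory numFieldNormedType.Exports.
Set Implicit Arguments. Unset Strict Implicit. Unset Printing Implicit Defensive.
Local Open Scope ring_scope.
Local Open Scope classical_set_scope.

Section OverlapRatio.
Variable R : realFieldType.
Implicit Types a b : R.

(* [overlap_ratio 0 b = 0], since [0 / 0 = 0]. *)
Definition overlap_ratio a b := Num.min a b / a.

Lemma overlap_ratio_itv a b : 0 <= a -> 0 <= b -> 0 <= overlap_ratio a b <= 1.
Proof.
move=> a0 b0; rewrite /overlap_ratio; have [->|a_neq0] := eqVneq a 0.
  by rewrite invr0 mulr0 lexx ler01.
have a_gt0 : 0 < a by rewrite lt_def a_neq0.
by rewrite divr_ge0 ?le_min ?a0 //= ler_pdivrMr // mul1r ge_min lexx.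
Qed.

Lemma mulr_overlap_ratio a b : 0 <= b -> a * overlap_ratio a b = Num.min a b.
Proof.
move=> b0; rewrite /overlap_ratio; have [->|a_neq0] := eqVneq a 0.
  by rewrite mul0r min_l.
by rewrite mulrC divfK.
Qed.

Lemma subr_min_le_dist a b : a - Num.min a b <= `|a - b|.
Proof. by rewrite /Num.min; case: ifP => _; rewrite ?subrr ?ler_norm. Qed.

End OverlapRatio.

Section Couplings.
Variables (R : realType) (S : finType).
Implicit Types (mu nu : S -> R) (om o : S * S -> R) (g : S -> S -> R).

Lemma sum_pair (F : S * S -> R) : \sum_q F q = \sum_u \sum_v F (u, v).
Proof. by rewrite pair_big; apply: eq_bigr => -[]. Qed.

Lemma coupling_ge0 mu nu om : coupling mu nu om -> forall p, 0 <= om p.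
Proof. by case=> [[]]. Qed.

Lemma coupling_mass mu nu om : coupling mu nu om -> \sum_x \sum_y om (x, y) = 1.
Proof. by case=> [[_ h]] _; rewrite -sum_pair. Qed.

Lemma product_coupling mu nu : is_distr mu -> is_distr nu ->
  coupling mu nu (fun p => mu p.1 * nu p.2).
Proof.
move=> [mu0 mu1] [nu0 nu1]; split; [split|split] => [p||x|x] /=.
- exact: mulr_ge0.
- by rewrite sum_pair /=; under eq_bigr do rewrite -big_distrr /= nu1 mulr1.
- by rewrite -big_distrr /= nu1 mulr1.
- by rewrite -big_distrl /= mu1 mul1r.
Qed.

Lemma diagonal_coupling mu : is_distr mu ->
  coupling mu mu (fun p => if p.1 == p.2 then mu p.1 else 0).
Proof.
move=> [mu0 mu1].
have row x : \sum_y (if x == y then mu x else 0) = mu x.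
  by rewrite (bigD1 x) //= eqxx big1 ?addr0 // => y /negPf; rewrite eq_sym => ->.
have col x : \sum_y (if y == x then mu y else 0) = mu x.
  by rewrite (bigD1 x) //= eqxx big1 ?addr0 // => y /negPf ->.
split; [split|split] => //= [p|].
- by case: ifP.
- by rewrite sum_pair; under eq_bigr do rewrite row.
Qed.

(* The missing mass of [o] is distributed as the normalised product of its two
   marginal deficits. *)
Lemma subcoupling_completion mu nu o g :
  is_distr mu -> is_distr nu -> (forall p, 0 <= o p) ->
  (forall x, \sum_y o (x, y) <= mu x) -> (forall y, \sum_x o (x, y) <= nu y) ->
  (forall x y, g x y <= 1) ->
  exists om, coupling mu nu om /\
    \sum_x \sum_y om (x, y) * g x y
      <= \sum_x \sum_y o (x, y) * g x y + (1 - \sum_x \sum_y o (x, y)).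
Proof.
move=> [_ mu1] [_ nu1] o0 orow ocol g1.
pose rho1 x := mu x - \sum_y o (x, y).
pose rho2 y := nu y - \sum_x o (x, y).
pose M := 1 - \sum_x \sum_y o (x, y).
have rho1_ge0 x : 0 <= rho1 x by rewrite subr_ge0.
have rho2_ge0 y : 0 <= rho2 y by rewrite subr_ge0.
have sum_rho1 : \sum_x rho1 x = M by rewrite sumrB mu1.
have sum_rho2 : \sum_y rho2 y = M by rewrite sumrB nu1 exchange_big.
have normK (rho : S -> R) : (forall x, 0 <= rho x) -> \sum_x rho x = M ->
    forall x, rho x * M / M = rho x.
  move=> rho0 sum_rho x; have [M0|/mulfK -> //] := eqVneq M 0.
  have rho_eq0 := psumr_eq0P (fun y _ => rho0 y) (etrans sum_rho M0).
  by rewrite rho_eq0 ?mul0r.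
pose om p := o p + rho1 p.1 * rho2 p.2 / M.
have M_ge0 : 0 <= M by rewrite -sum_rho1 sumr_ge0.
have om_row x : \sum_y om (x, y) = mu x.
  rewrite big_split /= -big_distrl -big_distrr /= sum_rho2 normK //.
  by rewrite addrC subrK.
have om_col y : \sum_x om (x, y) = nu y.
  rewrite big_split /= -big_distrl -big_distrl /= sum_rho1.
  by rewrite (mulrC M) normK // addrC subrK.
have rest_mass : \sum_x \sum_y rho1 x * rho2 y / M = M.
  rewrite -[RHS]sum_rho1; apply: eq_bigr => x _.
  by rewrite -big_distrl -big_distrr /= sum_rho2 normK.
exists om; split.
  split; [split|split] => // [p|].
  - by rewrite addr_ge0 ?divr_ge0 ?mulr_ge0.
  - by rewrite sum_pair; under eq_bigr do rewrite om_row.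
rewrite -[X in _ + X]rest_mass -big_split /=.
apply: ler_sum => x _; rewrite -big_split /=; apply: ler_sum => y _.
rewrite mulrDl lerD2l ler_piMr ?g1 //.
by rewrite divr_ge0 ?mulr_ge0.
Qed.

Lemma coupling_scaled_deficit mu nu om (a b : S -> R) : coupling mu nu om ->
  (forall x, 0 <= a x <= 1) -> (forall y, 0 <= b y <= 1) ->
  1 - \sum_x \sum_y om (x, y) * a x * b y
    <= \sum_x mu x * (1 - a x) + \sum_y nu y * (1 - b y).
Proof.
move=> c a01 b01; have [_ [omr omc]] := c.
have -> : \sum_x mu x * (1 - a x) = \sum_x \sum_y om (x, y) * (1 - a x).
  by apply: eq_bigr => x _; rewrite -omr big_distrl.
have -> : \sum_y nu y * (1 - b y) = \sum_x \sum_y om (x, y) * (1 - b y).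
  by rewrite exchange_big; apply: eq_bigr => y _; rewrite -omc big_distrl.
rewrite -[X in X - _ <= _](coupling_mass c) -sumrB -big_split /=.
apply: ler_sum => x _; rewrite -sumrB -big_split /=.
apply: ler_sum => y _; have := coupling_ge0 c (x, y).
have /andP[a0 a1] := a01 x; have /andP[b0 b1] := b01 y.
move: (om (x, y)) => w w0.
have : 0 <= w * ((1 - a x) * (1 - b y)) by rewrite !mulr_ge0 ?subr_ge0.
nra.
Qed.

(* Scaling [om] by the overlap ratios of the marginals yields a sub-coupling of
   [mu'] and [nu'] whose missing mass is at most the L1 distance of the
   marginals; it is then completed. *)
Lemma coupling_perturb mu nu mu' nu' om g :
  is_distr mu' -> is_distr nu' -> coupling mu nu om -> unit_valued g ->
  exists om', coupling mu' nu' om' /\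
    \sum_x \sum_y om' (x, y) * g x y
      <= \sum_x \sum_y om (x, y) * g x y
         + (\sum_x `|mu x - mu' x| + \sum_y `|nu y - nu' y|).
Proof.
move=> mu'D nu'D c ug; have [[om0 _] [omr omc]] := c.
have [[mu'0 _] [nu'0 _]] := (mu'D, nu'D).
have mu0 x : 0 <= mu x by rewrite -omr sumr_ge0.
have nu0 y : 0 <= nu y by rewrite -omc sumr_ge0.
pose a x := overlap_ratio (mu x) (mu' x).
pose b y := overlap_ratio (nu y) (nu' y).
have a01 x : 0 <= a x <= 1 by exact: overlap_ratio_itv.
have b01 y : 0 <= b y <= 1 by exact: overlap_ratio_itv.
have mu_a x : mu x * a x = Num.min (mu x) (mu' x) by exact: mulr_overlap_ratio.
have nu_b y : nu y * b y = Num.min (nu y) (nu' y) by exact: mulr_overlap_ratio.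
clearbody a b.
pose o p := om p * a p.1 * b p.2.
have o0 p : 0 <= o p.
  have /andP[? _] := a01 p.1; have /andP[? _] := b01 p.2.
  by rewrite /o; apply: mulr_ge0 => //; apply: mulr_ge0.
have o_le_om p : o p <= om p.
  rewrite /o -mulrA ler_piMr //; have /andP[a0 a1] := a01 p.1.
  by have /andP[b0 b1] := b01 p.2; rewrite mulr_ile1.
have orow x : \sum_y o (x, y) <= mu' x.
  apply: (@le_trans _ _ (mu x * a x)); last by rewrite mu_a ge_min lexx orbT.
  rewrite -omr big_distrl; apply: ler_sum => y _.
  have /andP[a0 _] := a01 x; have /andP[b0 b1] := b01 y.
  by rewrite /o /= ler_piMr ?mulr_ge0 ?om0.
have ocol y : \sum_x o (x, y) <= nu' y.
  apply: (@le_trans _ _ (nu y * b y)); last by rewrite nu_b ge_min lexx orbT.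
  rewrite -omc big_distrl; apply: ler_sum => x _.
  have /andP[a0 a1] := a01 x; have /andP[b0 _] := b01 y.
  by rewrite /o /= ler_wpM2r // ler_piMr ?om0.
have g1 x y : g x y <= 1 by case/andP: (ug x y).
have [om' [c' le_om']] := subcoupling_completion mu'D nu'D o0 orow ocol g1.
exists om'; split => //; apply: le_trans le_om' _; apply: lerD.
  apply: ler_sum => x _; apply: ler_sum => y _.
  by rewrite ler_wpM2r //; case/andP: (ug x y).
apply: le_trans (coupling_scaled_deficit c a01 b01) _.
by apply: lerD; apply: ler_sum => x _;
  rewrite mulrBr mulr1 (mu_a, nu_b) subr_min_le_dist.
Qed.

End Couplings.

Section TransitionMetric.
Variables (R : realType) (S : finType).
Implicit Types sigma tau : S -> S -> R.

Lemma dF_ge0 sigma tau : 0 <= dF sigma tau.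
Proof. exact: bigmax_ge_id. Qed.

Lemma le_dF sigma tau u x : `|sigma u x - tau u x| <= dF sigma tau.
Proof. by apply: le_trans (le_bigmax _ _ u); apply: le_bigmax. Qed.

Lemma sum_dist_le_dF sigma tau u :
  \sum_x `|sigma u x - tau u x| <= #|S|%:R * dF sigma tau.
Proof.
rewrite -sum1_card natr_sum big_distrl /=.
by apply: ler_sum => x _; rewrite mul1r le_dF.
Qed.

End TransitionMetric.

Section BisimilarityDistance.
Variables (R : realType) (S : finType) (L : eqType) (ell : S -> L).
Implicit Types tau d g : S -> S -> R.

Definition coupling_costs tau d u v :=
  [set r | exists omega, coupling (tau u) (tau v) omega /\
             r = \sum_x \sum_y omega (x, y) * d x y].

Lemma coupling_costs_ge0 tau d u v :
  unit_valued d -> lbound (coupling_costs tau d u v) 0.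
Proof.
move=> ud _ [om [c ->]]; apply: sumr_ge0 => x _; apply: sumr_ge0 => y _.
by rewrite mulr_ge0 ?(coupling_ge0 c); case/andP: (ud x y).
Qed.

Lemma coupling_costs_le1 tau d u v r :
  unit_valued d -> coupling_costs tau d u v r -> r <= 1.
Proof.
move=> ud [om [c ->]]; rewrite -(coupling_mass c).
apply: ler_sum => x _; apply: ler_sum => y _.
by rewrite ler_piMr ?(coupling_ge0 c); case/andP: (ud x y).
Qed.

Lemma coupling_costs_neq0 tau d u v :
  is_trans tau -> coupling_costs tau d u v !=set0.
Proof.
move=> htau; exists (\sum_x \sum_y (tau u x * tau v y) * d x y).
by exists (fun p => tau u p.1 * tau v p.2); split => //; exact: product_coupling.
Qed.

Lemma Delta_le_coupling tau d u v omega :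
  unit_valued d -> ell u = ell v -> coupling (tau u) (tau v) omega ->
  Delta ell tau d u v <= \sum_x \sum_y omega (x, y) * d x y.
Proof.
move=> ud e c; rewrite /Delta e eqxx /=.
apply: (ge_inf (E := coupling_costs tau d u v)); last by exists omega.
by exists 0; exact: coupling_costs_ge0.
Qed.

Lemma Delta_unit_valued tau d :
  is_trans tau -> unit_valued d -> unit_valued (Delta ell tau d).
Proof.
move=> htau ud u v; rewrite /Delta; case: ifP => _; first by rewrite ler01 lexx.
have [r cr] := coupling_costs_neq0 d u v htau.
have clb := @coupling_costs_ge0 tau d u v ud.
rewrite lb_le_inf //=; last by exists r.
by apply: le_trans (coupling_costs_le1 ud cr); apply: ge_inf => //; exists 0.
Qed.

Lemma le_Delta tau d1 d2 : is_trans tau -> unit_valued d1 ->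
  (forall u v, d1 u v <= d2 u v) ->
  forall u v, Delta ell tau d1 u v <= Delta ell tau d2 u v.
Proof.
move=> htau ud1 le_d u v; have [e|ne] := eqVneq (ell u) (ell v); last first.
  by rewrite /Delta ne.
rewrite {2}/Delta e eqxx /=; apply: lb_le_inf; first exact: coupling_costs_neq0.
move=> _ [om [c ->]]; apply: le_trans (Delta_le_coupling ud1 e c) _.
apply: ler_sum => x _; apply: ler_sum => y _.
by rewrite ler_wpM2l ?(coupling_ge0 c).
Qed.

Definition Delta_prefixed tau g :=
  unit_valued g /\ forall u v, Delta ell tau g u v <= g u v.

(* Knaster--Tarski: the pointwise infimum of all prefixed points is a fixed
   point, hence lies above the least one. *)
Lemma bisim_dist_le_prefixed tau d g :
  is_trans tau -> is_bisim_dist ell tau d -> Delta_prefixed tau g ->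
  forall u v, d u v <= g u v.
Proof.
move=> htau [_ _ d_least] pre_g.
pose E u v := [set r | exists h, Delta_prefixed tau h /\ r = h u v].
pose m u v := inf (E u v).
have one_unit : unit_valued (fun _ _ : S => 1 : R) by move=> ? ?; rewrite ler01 lexx.
have pre_one : Delta_prefixed tau (fun _ _ => 1).
  by split=> // u v; case/andP: (Delta_unit_valued htau one_unit u v).
have E_neq0 u v : E u v !=set0 by exists 1, (fun _ _ => 1).
have E_ge0 u v : lbound (E u v) 0 by move=> _ [h [[uh _] ->]]; case/andP: (uh u v).
have m_le h : Delta_prefixed tau h -> forall u v, m u v <= h u v.
  by move=> pre_h u v; apply: ge_inf; [exists 0|exists h].
have m_unit : unit_valued m.
  by move=> u v; rewrite lb_le_inf //=; exact: m_le pre_one u v.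
have Dm_le_m u v : Delta ell tau m u v <= m u v.
  apply: lb_le_inf => // _ [h [pre_h ->]].
  by apply: le_trans (le_Delta htau m_unit (m_le h pre_h) u v) _; case: pre_h.
have pre_Dm : Delta_prefixed tau (Delta ell tau m).
  split; first exact: Delta_unit_valued.
  by apply: le_Delta => //; exact: Delta_unit_valued.
have fix_m : Delta ell tau m = m.
  apply/funext => u; apply/funext => v; apply/eqP.
  by rewrite eq_le Dm_le_m m_le.
by move=> u v; apply: le_trans (d_least m m_unit fix_m u v) (m_le g pre_g u v).
Qed.

End BisimilarityDistance.

Section Reachability.
Variables (R : realType) (S : finType) (L : eqType) (ell : S -> L).
Variables (tau : S -> S -> R) (P : S * S -> S * S -> R).
Hypothesis hP : is_policy ell tau P.
Local Notation reach := (reach_within P (@S2_Delta S)).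

Lemma policy_is_distr p : is_distr (P p).
Proof.
have [P_coupling P_stop] := hP.
have [ne_l|/negbNE eq_l] := boolP (ell p.1 != ell p.2).
  have Pp := P_stop p ne_l; split=> [q|]; first by rewrite Pp; case: ifP; rewrite ?ler01.
  by rewrite (bigD1 p) //= Pp eqxx big1 ?addr0 // => q /negPf nq; rewrite Pp nq.
suff [] : coupling (tau p.1) (tau p.2) (P p) by [].
apply: P_coupling; have [e|ne] := pselect (p.1 = p.2); [left|right] => //.
by case=> [/ne|] //; rewrite /S2_1 /= eq_l.
Qed.

Lemma reach_within_diag k p : p.1 = p.2 -> reach k p = 1.
Proof.
move=> e; have inD : `[< S2_Delta p >] by apply/asboolP.
by case: k => [|k] /=; rewrite inD.
Qed.

Lemma reach_within_S k p : p.1 <> p.2 -> reach k.+1 p = \sum_q P p q * reach k q.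
Proof. by move=> ne /=; rewrite ifF //; apply/asboolP. Qed.

Lemma reach_within_itv k p : 0 <= reach k p <= 1.
Proof.
elim: k p => [|k IHk] p; first by rewrite /=; case: ifP; rewrite ?lexx ?ler01.
have [e|ne] := pselect (p.1 = p.2); first by rewrite reach_within_diag // ler01 lexx.
have [P0 P1] := policy_is_distr p; rewrite reach_within_S //.
rewrite sumr_ge0 => [|q _]; last by rewrite mulr_ge0 //; case/andP: (IHk q).
rewrite -P1 ler_sum // => q _.
by rewrite ler_piMr //; case/andP: (IHk q).
Qed.

Lemma reach_within_label k p : ell p.1 != ell p.2 -> reach k p = 0.
Proof.
move=> ne_l; have ne : p.1 <> p.2 by move=> e; rewrite e eqxx in ne_l.
have Pp := hP.2 p ne_l.
elim: k => [|k IHk]; first by rewrite /= ifF //; apply/asboolP.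
rewrite reach_within_S // (bigD1 p) //= IHk mulr0 add0r big1 // => q /negPf nq.
by rewrite Pp nq mul0r.
Qed.

Lemma unreach_within_S k p : p.1 <> p.2 ->
  1 - reach k.+1 p = \sum_q P p q * (1 - reach k q).
Proof.
move=> ne; have [_ P1] := policy_is_distr p.
rewrite reach_within_S //; under [RHS]eq_bigr do rewrite mulrBr mulr1.
by rewrite sumrB P1.
Qed.

End Reachability.

Section UnreachabilityBound.
Variables (R : realType) (S : finType) (L : eqType) (ell : S -> L).
Variables (tau sigma : S -> S -> R) (P : S * S -> S * S -> R).
Local Notation reach := (reach_within P (@S2_Delta S)).

Definition unreach_bound (eta : R) (N : nat) (p : S * S) : R :=
  \big[Num.min/1]_(j < N.+1) (1 - reach j p + j%:R * eta).

Lemma unreach_bound_le eta N j p : (j <= N)%N ->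
  unreach_bound eta N p <= 1 - reach j p + j%:R * eta.
Proof. by rewrite -ltnS => ltjN; exact: (bigmin_le _ (Ordinal ltjN)). Qed.

Lemma unreach_bound_diag_le0 eta N x : unreach_bound eta N (x, x) <= 0.
Proof.
apply: le_trans (unreach_bound_le eta (x, x) (leq0n N)) _.
by rewrite reach_within_diag // subrr mul0r addr0.
Qed.

Hypothesis hsigma : is_trans sigma.
Hypothesis hP : is_policy ell tau P.

Lemma unreach_bound_unit_valued eta N : 0 <= eta ->
  unit_valued (fun u v => unreach_bound eta N (u, v)).
Proof.
move=> eta0 u v; rewrite bigmin_le_id andbT le_bigmin ?ler01 // => j _.
rewrite addr_ge0 ?mulr_ge0 // subr_ge0.
by case/andP: (reach_within_itv hP j (u, v)).
Qed.

Local Notation eta := ((#|S|%:R * dF sigma tau) *+ 2).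
Local Notation g N := (fun u v => unreach_bound eta N (u, v)).

Lemma eta_ge0 : 0 <= eta.
Proof. by rewrite mulrn_wge0 // mulr_ge0 ?dF_ge0. Qed.

Lemma Delta_unreach_bound_S N i u v : (i < N)%N -> u != v -> ell u = ell v ->
  Delta ell sigma (g N) u v <= 1 - reach i.+1 (u, v) + i.+1%:R * eta.
Proof.
move=> ltiN neq_uv eq_l; have g_unit := unreach_bound_unit_valued N eta_ge0.
have c : coupling (tau u) (tau v) (P (u, v)).
  apply: hP.1; right; case=> [/eqP|]; first by rewrite (negPf neq_uv).
  by rewrite /S2_1 /= eq_l eqxx.
have [om [c' le_om]] := coupling_perturb (hsigma u) (hsigma v) c g_unit.
apply: le_trans (Delta_le_coupling g_unit eq_l c') _; apply: le_trans le_om _.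
have [_ P1] := policy_is_distr hP (u, v).
have -> : 1 - reach i.+1 (u, v) + i.+1%:R * eta =
    \sum_x \sum_y P (u, v) (x, y) * (1 - reach i (x, y) + i%:R * eta) + eta.
  rewrite -(sum_pair (fun q => P (u, v) q * (1 - reach i q + i%:R * eta))).
  under eq_bigr do rewrite mulrDr.
  rewrite big_split /= -big_distrl /= P1 mul1r -(unreach_within_S hP) //.
    by rewrite -natr1 mulrDl mul1r addrA.
  by move/eqP; rewrite (negPf neq_uv).
apply: lerD.
  apply: ler_sum => x _; apply: ler_sum => y _.
  by rewrite ler_wpM2l ?(coupling_ge0 c) ?unreach_bound_le // ltnW.
by rewrite mulr2n; apply: lerD; under eq_bigr do rewrite distrC; exact: sum_dist_le_dF.
Qed.

Lemma unreach_bound_prefixed N : Delta_prefixed ell sigma (g N).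
Proof.
have g_unit := unreach_bound_unit_valued N eta_ge0.
split=> // u v; have [eq_l|ne_l] := eqVneq (ell u) (ell v); last first.
  rewrite /Delta ne_l; apply: le_bigmin => // j _.
  by rewrite (reach_within_label hP) // subr0 lerDl mulr_ge0 ?eta_ge0.
have [<-|neq_uv] := eqVneq u v.
  apply: le_trans (Delta_le_coupling g_unit erefl (diagonal_coupling (hsigma u))) _.
  apply: (@le_trans _ _ 0); last by case/andP: (g_unit u u).
  apply: sumr_le0 => x _; apply: sumr_le0 => y _ /=; case: eqP => [<-|_].
    by rewrite mulr_ge0_le0 ?unreach_bound_diag_le0 ?(hsigma u).1.
  by rewrite mul0r.
have /andP[_ D_le1] := Delta_unit_valued ell hsigma g_unit u v.
apply: le_bigmin => // -[[|i] ltiN] _; last exact: Delta_unreach_bound_S.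
by rewrite /= ifF ?subr0 ?mul0r ?addr0 //; apply/asboolP/eqP.
Qed.

Lemma bisim_dist_le_unreach d N s t : is_bisim_dist ell sigma d ->
  d s t <= 1 - reach N (s, t) + N%:R * eta.
Proof.
move=> hd; apply: le_trans (unreach_bound_le _ _ (leqnn N)).
exact: bisim_dist_le_prefixed hsigma hd (unreach_bound_prefixed N) s t.
Qed.

End UnreachabilityBound.

Lemma cvg0_of_bounds (R : realType) (a b c x : nat -> R) :
  (forall n, 0 <= a n) -> b @ \oo --> 0 -> x @ \oo --> 0 ->
  (forall N n, a n <= b N + c N * x n) -> a @ \oo --> 0.
Proof.
move=> a0 b_cvg x_cvg a_le; apply/cvgrPdist_le => e e_gt0.
have e2_gt0 : 0 < e / 2 by rewrite divr_gt0.
have [N _ b_small] := (cvgrPdist_le _ _).1 b_cvg _ e2_gt0.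
have /cvgrPdist_le /(_ _ e2_gt0) cx_small : (fun n => c N * x n) @ \oo --> 0.
  by rewrite -(mulr0 (c N)); apply: cvgM => //; exact: cvg_cst.
near=> n; rewrite sub0r normrN ger0_norm //; apply: le_trans (a_le N n) _.
rewrite [leRHS]splitr; apply: lerD.
  by apply: le_trans (b_small N (leqnn N)); rewrite sub0r normrN ler_norm.
have : `|0 - c N * x n| <= e / 2 by near: n.
by apply: le_trans; rewrite sub0r normrN ler_norm.
Unshelve. all: end_near.
Qed.

Theorem theorem1 (R : realType) (S : finType) (L : eqType) (ell : S -> L)
  (tau : S -> S -> R) (s t : S) :
  is_trans tau ->
  (exists s1 s2 : S, ell s1 != ell s2) ->
  robust_bisim ell tau s t ->
  forall (taun : nat -> S -> S -> R) (dn : nat -> S -> S -> R),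
    (forall n, is_trans (taun n)) ->
    (fun n : nat => dF (taun n) tau) @ \oo --> (0 : R) ->
    (forall n, is_bisim_dist ell (taun n) (dn n)) ->
    (fun n : nat => dn n s t) @ \oo --> (0 : R).
Proof.
move=> _ _ [P [hP reach_cvg]] taun dn htaun dF_cvg hdn.
apply: (@cvg0_of_bounds _ _ (fun N => 1 - reach_within P (@S2_Delta S) N (s, t))
  (fun N => N%:R * (#|S|%:R *+ 2)) (fun n => dF (taun n) tau)) => //.
- by move=> n; have [/(_ s t) /andP[]] := hdn n.
- by rewrite -(subrr 1); apply: cvgB => //; exact: cvg_cst.
- move=> N n; apply: le_trans (bisim_dist_le_unreach (htaun n) hP N s t (hdn n)) _.
  by rewrite -mulrnAl mulrA.
Qed.
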